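(* Let $G$ be a connected graph, $c\in V(G)$, and run the scan procedure at $c$ (with any processing order). Let $e$ and $f$ be distinct edges incident to $c$. Then $(e,f)\in(\overline{\alpha}_c\cup\beta_c)^*$ if and only if $(e,f)\in\mathfrak d_c^*$.
   Context: All graphs are finite, simple, undirected; $N(x)$ is the open neighborhood of $x$. For distinct edges $e=vu$, $f=vw$ sharing the vertex $v$, a square spanned by $e$ and $f$ is a 4-cycle $vuxw$ with $x\ne v$ adjacent to both $u$ and $w$; $x$ is its top vertex. The square is chordless if it is an induced 4-cycle ($uw\notin E$, $vx\notin E$); its opposite edge pairs are $\{vu,wx\}$ and $\{vw,ux\}$. The edges $e,f$ span a unique square if $|N(u)\cap N(w)|=2$. A top vertex $x$ is unique if $|N(x)\cap N(v)|=2$. The relation $\delta_G$ on $E(G)$: $(e,f)\in\delta_G$ iff (i) $e,f$ are distinct adjacent edges and it is not the case that they span a unique square and that square is chordless; or (ii) $e,f$ are opposite edges of a chordless square; or (iii) $e=f$. For $v\in V(G)$, $E_v$ is the set of edges incident to $v$, and $\mathfrak d_v=((E_v\times E)\cup(E\times E_v))\cap\delta_G$; $\mathfrak d_v^*$ is its transitive closure (on $E(G)$). Scan procedure at $c$: the vertices of $N(c)$ are called primal, and edges incident to $c$ primal edges. Maintain two sets $I$ (incidence list) and $A$ (absence list) of unordered pairs of primal edges, both initially empty, and for every non-primal vertex $w\ne c$ a record of at most two ''recorded primal neighbors'' (first and second), initially none. Process the neighbors $u$ of $c$ one by one in an arbitrary order, and for each such $u$ process its neighbors $w\neq c$ in an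 arbitrary order: (1) if $w\in N(c)$, add $\{cu,cw\}$ to $A$; (2) else, if $w$ has no recorded primal neighbor, record $u$ as its first primal neighbor; (3) else, if $w$ has exactly one recorded primal neighbor $v$, record $u$ as its second primal neighbor, and if $\{cu,cv\}\notin I$ add $\{cu,cv\}$ to $I$, otherwise add $\{cu,cv\}$ to $A$; (4) else ($w$ has recorded first and second primal neighbors $v_1,v_2$) add $\{cv_1,cv_2\},\{cv_1,cu\},\{cv_2,cu\}$ to $A$ (the record is not changed). After the procedure, $\beta_c$ is the symmetric relation on primal edges consisting of the pairs in $A$, and $\overline{\alpha}_c$ the symmetric relation consisting of all pairs of primal edges not in $I$. $(\overline{\alpha}_c\cup\beta_c)^*$ denotes the transitive closure of their union (a relation on primal edges). *)

(* Simple graph = symmetric irreflexive relation adj on a finType T.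
   Edges are 2-element vertex sets {x,y} : {set T} with adj x y. *)
From mathcomp Require Import all_boot.
Set Implicit Arguments. Unset Strict Implicit. Unset Printing Implicit Defensive.

Section Graph.
Variables (T : finType) (adj : rel T).

Definition nbr (x : T) : {set T} := [set y | adj x y].

Definition is_edge (e : {set T}) : bool :=
  [exists x, exists y, adj x y && (e == [set x; y])].

(* e = vu, f = vw span a unique square (|N(u) ∩ N(w)| = 2) and that square
   v u x w (x the other common neighbour) is chordless *)
Definition unique_chordless (v u w : T) : bool :=
  (#|nbr u :&: nbr w| == 2) &&
  [exists x, [&& x \in nbr u :&: nbr w, x != v, ~~ adj u w & ~~ adj v x]].

Definition delta_i (e f : {set T}) : bool :=
  (e != f) &&
  [exists v, exists u, exists w,
     [&& adj v u, adj v w, e == [set v; u], f == [set v; w]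
       & ~~ unique_chordless v u w]].

Definition chordless_square (v u x w : T) : bool :=
  [&& adj v u, adj u x, adj x w, adj w v, x != v, u != w,
      ~~ adj u w & ~~ adj v x].

Definition delta_ii (e f : {set T}) : bool :=
  [exists v, exists u, exists x, exists w,
     [&& chordless_square v u x w, e == [set v; u] & f == [set w; x]]].

Definition delta (e f : {set T}) : bool :=
  [&& is_edge e, is_edge f & [|| delta_i e f, delta_ii e f | e == f]].

Definition dv (v : T) (e f : {set T}) : bool :=
  delta e f && ((v \in e) || (v \in f)).

(* transitive closure d_v^*; for distinct e f, connect coincides with it *)
Definition dv_star (v : T) : rel {set T} := connect (dv v).

Variable c : T.

Definition pe (u : T) : {set T} := [set c; u].
Definition ppair (u v : T) : {set {set T}} := [set pe u; pe v].

Record scan_state := ScanState {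
  sI : {set {set {set T}}};
  sA : {set {set {set T}}};
  srec : T -> seq T           (* recorded primal neighbours (first, second) *)
}.

Definition scan_init : scan_state := ScanState set0 set0 (fun _ => [::]).

Definition upd (r : T -> seq T) (w : T) (s : seq T) : T -> seq T :=
  fun y => if y == w then s else r y.

(* processing neighbour w (<> c) of the primal vertex u *)
Definition scan_step (st : scan_state) (p : T * T) : scan_state :=
  let: (u, w) := p in
  if adj c w then ScanState (sI st) (ppair u w |: sA st) (srec st)
  else match srec st w with
  | [::] => ScanState (sI st) (sA st) (upd (srec st) w [:: u])
  | [:: v] =>
      if ppair u v \notin sI st
      then ScanState (ppair u v |: sI st) (sA st) (upd (srec st) w [:: v; u])
      else ScanState (sI st) (ppair u v |: sA st) (upd (srec st) w [:: v; u])
  | v1 :: v2 :: _ =>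
      ScanState (sI st)
        (ppair v1 v2 |: (ppair v1 u |: (ppair v2 u |: sA st))) (srec st)
  end.

(* ord : processing order of N(c); nb u : processing order of N(u) \ {c} *)
Definition scan (ord : seq T) (nb : T -> seq T) : scan_state :=
  foldl scan_step scan_init [seq (u, w) | u <- ord, w <- nb u].

Definition valid_order (ord : seq T) (nb : T -> seq T) : Prop :=
  [/\ uniq ord, (forall u, (u \in ord) = adj c u)
    & forall u, adj c u ->
        uniq (nb u) /\ (forall w, (w \in nb u) = adj u w && (w != c))].

Definition primal (e : {set T}) : bool := [exists u, adj c u && (e == pe u)].

(* beta_c ∪ (alpha_c-bar), as a relation on primal edges *)
Definition alpha_beta (st : scan_state) (e f : {set T}) : bool :=
  [&& primal e, primal f &
      ([set e; f] \notin sI st) || ([set e; f] \in sA st)].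

End Graph.

From mathcomp Require Import all_boot.
Set Implicit Arguments. Unset Strict Implicit. Unset Printing Implicit Defensive.

(* Let R be the relation alpha_c-bar ∪ beta_c computed by the scan.  For a
   non-primal vertex x, the primal neighbours of x appear in the order in
   which the pairs (u, x) are processed; the record of x keeps the first two,
   whose primal edges form the "front" of x.  The proof has three layers.
   1. Graph facts about delta: clauses (i) and (ii) as constructors, symmetry,
      distinct primal edges are only related by clause (i), and any two primal
      neighbours of a "hub" (a non-primal x with other than two primal
      neighbours) give d_c-connected primal edges.
   2. Invariants of the scan, by induction along the processed pairs: I is
      exactly the set of fronts; A contains the pairs of adjacent primal
      vertices, the pairs at hubs and the fronts shared by two vertices; and
      every pair on A is d_c-connected.
   3. For the complete scan: every R-step is a d_c-connection (soundness), and
      every d_c-step leaving the R-class of a primal edge stays in it, possibly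
      passing through one non-primal edge (completeness).
   The theorem follows. *)

Lemma eq_set2 (T : finType) (a b a' b' : T) :
  [set a; b] = [set a'; b'] -> (a = a' /\ b = b') \/ (a = b' /\ b = a').
Proof.
move=> E.
have memE x : x \in [set a; b] -> x = a' \/ x = b' by rewrite E => /set2P.
have memE' x : x \in [set a'; b'] -> x = a \/ x = b by rewrite -E => /set2P.
case: (memE a (set21 _ _)) (memE b (set22 _ _)) => ? [] ?;
  case: (memE' a' (set21 _ _)) (memE' b' (set22 _ _)) => ? [] ?; subst; auto.
Qed.

Lemma card_gt2 (T : finType) (A : {set T}) a b d :
  a \in A -> b \in A -> d \in A -> a != b -> b != d -> d != a -> 2 < #|A|.
Proof. by move=> *; apply/card_gt2P; exists a, b, d. Qed.

Lemma card_third (T : finType) (A : {set T}) a b : a \in A -> b \in A -> a != b ->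
  #|A| != 2 -> exists2 y, y \in A & (y != a) && (y != b).
Proof.
move=> aA bA ab nA; apply/exists_inP; apply: contraR nA => /exists_inPn none.
have -> : A = [set a; b].
  apply/setP => y; rewrite !inE; apply/idP/idP => [yA|/orP[]/eqP-> //].
  by move: (none y yA); rewrite negb_and !negbK.
by rewrite cards2 ab.
Qed.

Section Graph.
Variables (T : finType) (adj : rel T).
Hypotheses (sym : symmetric adj) (irr : irreflexive adj).
Variable c : T.

Lemma adj_neq x y : adj x y -> x != y.
Proof. by apply: contraTneq => ->; rewrite irr. Qed.

Lemma c_in_pe u : c \in pe c u.
Proof. exact: set21. Qed.

Lemma pe_inj u v : u != c -> pe c u = pe c v -> u = v.
Proof. by move=> uc /eq_set2 [[_ //]|[_ uc']]; rewrite uc' eqxx in uc. Qed.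

Lemma ppairC u v : ppair c u v = ppair c v u.
Proof. exact: setUC. Qed.

Lemma edge_of x y : adj x y -> is_edge adj [set x; y].
Proof. by move=> xy; apply/existsP; exists x; apply/existsP; exists y; rewrite xy eqxx. Qed.

Lemma primal_pe u : adj c u -> primal adj c (pe c u).
Proof. by move=> cu; apply/existsP; exists u; rewrite cu eqxx. Qed.

Lemma primalP e : primal adj c e -> exists2 u, adj c u & e = pe c u.
Proof. by case/existsP => u /andP[cu /eqP ->]; exists u. Qed.

Lemma edge_primal e : is_edge adj e -> c \in e -> primal adj c e.
Proof.
case/existsP=> x /existsP[y /andP[xy /eqP ->]] /set2P[] E; rewrite -E in xy *.
  exact: primal_pe.
by rewrite setUC; apply: primal_pe; rewrite sym.
Qed.

Lemma unique_chordlessC v u w :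
  unique_chordless adj v u w = unique_chordless adj v w u.
Proof.
rewrite /unique_chordless setIC; congr (_ && _); apply: eq_existsb => x.
by rewrite setIC (sym u w).
Qed.

Lemma not_uc_adj v u w : adj u w -> ~~ unique_chordless adj v u w.
Proof.
move=> uw; rewrite /unique_chordless uw /=; apply/nandP; right.
by apply/existsPn => x; rewrite !andbF.
Qed.

Lemma not_uc_card v u w :
  #|nbr adj u :&: nbr adj w| != 2 -> ~~ unique_chordless adj v u w.
Proof. by rewrite /unique_chordless => /negbTE ->. Qed.

Lemma delta_at v u w : adj v u -> adj v w -> u != w ->
  ~~ unique_chordless adj v u w -> delta adj [set v; u] [set v; w].
Proof.
move=> vu vw uw nuc; rewrite /delta !edge_of //=; apply/orP; left.
apply/andP; split.
  apply/negP => /eqP/setP/(_ u); rewrite set22 => /esym/set2P[uv|/eqP].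
    by rewrite uv irr in vu.
  exact/negP.
by apply/existsP; exists v; apply/existsP; exists u; apply/existsP; exists w;
   rewrite vu vw !eqxx nuc.
Qed.

Lemma delta_square v u x w :
  chordless_square adj v u x w -> delta adj [set v; u] [set w; x].
Proof.
move=> sq; move: (sq) => /and4P[vu _ xw _].
rewrite /delta edge_of // edge_of 1?sym //=; apply/orP; right; apply/orP; left.
by apply/existsP; exists v; apply/existsP; exists u; apply/existsP; exists x;
   apply/existsP; exists w; rewrite sq !eqxx.
Qed.

Lemma delta_sym e f : delta adj e f -> delta adj f e.
Proof.
case/and3P=> ee ef /or3P[|dii|/eqP->]; last by rewrite /delta ef eqxx !orbT.
- case/andP=> ne /existsP[v /existsP[u /existsP[w /and5P[vu vw /eqP eE /eqP fE nuc]]]].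
  rewrite eE fE in ne *; apply: delta_at; rewrite // 1?unique_chordlessC //.
  by apply: contraNneq ne => ->.
- case/existsP: dii => v /existsP[u /existsP[x /existsP[w /and3P[sq /eqP-> /eqP->]]]].
  apply: delta_square.
  move: sq; rewrite /chordless_square => /and5P[vu ux xw wv /and4P[xv uw nuw nvx]].
  by rewrite (sym w x) xw (sym x u) ux (sym u v) vu (sym v w) wv uw xv (sym x v) nvx
     (sym w u) nuw.
Qed.

Lemma dv_sym : symmetric (dv adj c).
Proof.
by move=> e f; rewrite /dv orbC; congr (_ && _); apply/idP/idP => /delta_sym.
Qed.

Lemma dv_star_sym e f : dv_star adj c e f = dv_star adj c f e.
Proof. exact: (sym_connect_sym dv_sym). Qed.

Lemma dv_primal a b : adj c a -> adj c b -> a != b ->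
  ~~ unique_chordless adj c a b -> dv adj c (pe c a) (pe c b).
Proof. by move=> ca cb ab nuc; rewrite /dv c_in_pe andbT delta_at. Qed.

(* If a non-primal x has other than two primal neighbours, then any two of them
   a, b give d_c-connected primal edges: ca -(i)- ax -(ii)- cb, the second step
   through the chordless square a x b c when a, b are non-adjacent. *)
Lemma dv_star_hub x a b : ~~ adj c x -> x != c -> #|nbr adj c :&: nbr adj x| != 2 ->
  adj c a -> adj a x -> adj c b -> adj b x -> dv_star adj c (pe c a) (pe c b).
Proof.
move=> ncx xc n2 ca ax cb bx.
have [<-|ab] := eqVneq a b; first exact: connect0.
have [abE|nab] := boolP (adj a b).
  by apply: connect1; apply: dv_primal => //; apply: not_uc_adj.
apply: (connect_trans (y := [set a; x])); apply: connect1.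
  rewrite /dv c_in_pe andbT /pe setUC.
  apply: delta_at => //; first by rewrite sym.
    by rewrite eq_sym.
  exact: not_uc_card n2.
rewrite /dv c_in_pe orbT andbT; apply: delta_square.
by rewrite /chordless_square ax (sym x b) bx (sym b c) cb ca eq_sym ab xc
     (sym x c) ncx nab.
Qed.

(* Two distinct primal edges can only be related by clause (i) of delta: they
   share c, whereas opposite edges of a chordless square are disjoint. *)
Lemma delta_primal u v : adj c u -> adj c v -> u != v ->
  delta adj (pe c u) (pe c v) -> ~~ unique_chordless adj c u v.
Proof.
move=> cu cv uv /and3P[_ _ /or3P[]]; last first.
- by move/eqP/pe_inj; rewrite eq_sym adj_neq // => /(_ isT) uvE; rewrite uvE eqxx in uv.
- case/existsP=> v' /existsP[u' /existsP[x /existsP[w /and3P[sq /eqP eE /eqP fE]]]].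
  move: sq => /and5P[vu' u'x xw wv /and4P[xv u'w _ _]].
  by case: (eq_set2 eE) (eq_set2 fE) => -[? _] [] [? _]; subst;
     rewrite ?irr ?eqxx in vu' u'x xw wv xv u'w.
case/andP=> _ /existsP[v' /existsP[u' /existsP[w /and5P[vu' vw /eqP eE /eqP fE nuc]]]].
case: (eq_set2 eE) (eq_set2 fE) => -[? ?] [] [? ?]; subst => //;
  by rewrite ?irr ?eqxx in cu cv vu' vw uv.
Qed.

Definition seen (ps : seq (T * T)) (w : T) : seq T :=
  [seq p.1 | p <- ps & (p.2 == w) && ~~ adj c w].

Definition front (s : seq T) : {set {set T}} := ppair c (nth c s 0) (nth c s 1).

Definition scan_of (ps : seq (T * T)) : scan_state T :=
  foldl (scan_step adj c) (scan_init T) ps.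

Lemma mem_seen ps a w : (a \in seen ps w) = ((a, w) \in ps) && ~~ adj c w.
Proof.
apply/mapP/andP => [[[x y]]|[aw ncw]].
  by rewrite mem_filter /= => /andP[/andP[/eqP-> ->] ?] ->.
by exists (a, w); rewrite // mem_filter /= eqxx ncw.
Qed.

Lemma seen_other ps u w x : (x != w) || adj c w ->
  seen (rcons ps (u, w)) x = seen ps x.
Proof.
rewrite /seen filter_rcons /= => h; case: ifP => // /andP[/eqP wx ncx].
by move: h; rewrite wx eqxx (negbTE ncx).
Qed.

Lemma seen_self ps u w : ~~ adj c w -> seen (rcons ps (u, w)) w = rcons (seen ps w) u.
Proof. by move=> ncw; rewrite /seen filter_rcons /= eqxx ncw map_rcons. Qed.

Lemma srec_scan ps w : srec (scan_of ps) w = take 2 (seen ps w).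
Proof.
elim/last_ind: ps w => [//|ps [u x] IH] w.
rewrite /scan_of foldl_rcons -/(scan_of ps) /scan_step.
have [cx|ncx] := boolP (adj c x); first by rewrite IH seen_other ?cx ?orbT.
have [->|wx] := eqVneq w x.
  rewrite seen_self // IH; case E: (seen ps x) => [|v1 [|v2 s]] /=.
  - by rewrite /upd eqxx.
  - by case: ifP => _ /=; rewrite /upd eqxx.
  - by rewrite IH E /= !take0.
rewrite seen_other ?wx // IH.
case: (take 2 (seen ps x)) => [|v1 [|v2 s]] /=; rewrite /upd ?(negbTE wx) ?IH //.
by case: ifP => _ /=; rewrite (negbTE wx) IH.
Qed.

Variant scan_step_spec (ps : seq (T * T)) (u w : T) :
    {set {set {set T}}} -> {set {set {set T}}} -> Prop :=
| StepPrimal of adj c w :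
    scan_step_spec ps u w (sI (scan_of ps)) (ppair c u w |: sA (scan_of ps))
| StepFirst of ~~ adj c w & seen ps w = [::] :
    scan_step_spec ps u w (sI (scan_of ps)) (sA (scan_of ps))
| StepSecond v of ~~ adj c w & seen ps w = [:: v] :
    scan_step_spec ps u w (ppair c u v |: sI (scan_of ps))
      (if ppair c u v \in sI (scan_of ps) then ppair c u v |: sA (scan_of ps)
       else sA (scan_of ps))
| StepLater v1 v2 s of ~~ adj c w & seen ps w = [:: v1, v2 & s] :
    scan_step_spec ps u w (sI (scan_of ps))
      (ppair c v1 v2 |: (ppair c v1 u |: (ppair c v2 u |: sA (scan_of ps)))).

Lemma scan_stepP ps u w : scan_step_spec ps u w
  (sI (scan_of (rcons ps (u, w)))) (sA (scan_of (rcons ps (u, w)))).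
Proof.
rewrite /scan_of foldl_rcons -/(scan_of ps) /scan_step.
have [cw|ncw] := boolP (adj c w); first exact: StepPrimal.
rewrite srec_scan; case E: (seen ps w) => [|v [|v2 s]] /=.
- exact: StepFirst.
- have := StepSecond u ncw E.
  have [inI|nI] /= := boolP (ppair c u v \in sI (scan_of ps)); last by [].
  have /setUidPr -> // : [set ppair c u v] \subset sI (scan_of ps) by rewrite sub1set.
- exact: (StepLater u ncw E).
Qed.

Lemma scan_step_second ps u w v : ~~ adj c w -> seen ps w = [:: v] ->
  sI (scan_of (rcons ps (u, w))) = ppair c u v |: sI (scan_of ps) /\
  sA (scan_of (rcons ps (u, w))) =
    (if ppair c u v \in sI (scan_of ps) then ppair c u v |: sA (scan_of ps)
     else sA (scan_of ps)).
Proof.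
move=> ncw E; case: scan_stepP => [cw|_ E'|v' _ E'|v1 v2 s _ E'].
- by rewrite cw in ncw.
- by rewrite E in E'.
- by move: E'; rewrite E => -[<-].
- by rewrite E in E'.
Qed.

Lemma sI_mono ps p : sI (scan_of ps) \subset sI (scan_of (rcons ps p)).
Proof. by case: p => u w; case: scan_stepP => *; rewrite ?subsetU1. Qed.

Lemma sA_mono ps p : sA (scan_of ps) \subset sA (scan_of (rcons ps p)).
Proof.
apply/subsetP => q qA; case: p => u w.
by case: scan_stepP => *; rewrite ?inE ?qA ?orbT //; case: ifP; rewrite ?inE qA ?orbT.
Qed.

Lemma front_stable ps p x : 1 < size (seen ps x) ->
  1 < size (seen (rcons ps p) x) /\ front (seen (rcons ps p) x) = front (seen ps x).
Proof.
case: p => u w; have [|/norP[/negbNE/eqP-> ncw]] := boolP ((x != w) || adj c w).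
  by move=> /seen_other ->.
by rewrite seen_self //; case: (seen ps w) => [|v1 [|v2 s]].
Qed.

Lemma front_step ps u w x : 1 < size (seen (rcons ps (u, w)) x) ->
  (1 < size (seen ps x) /\ front (seen (rcons ps (u, w)) x) = front (seen ps x))
  \/ [/\ x = w, ~~ adj c w & exists2 v, seen ps w = [:: v] &
         front (seen (rcons ps (u, w)) x) = ppair c u v].
Proof.
have [|/norP[/negbNE/eqP-> ncw]] := boolP ((x != w) || adj c w).
  by move=> /seen_other ->; left.
rewrite seen_self //; case E: (seen ps w) => [|v1 [|v2 s]] //= _.
  by right; split=> //; exists v1; rewrite // /front /= ppairC.
by left.
Qed.

Lemma sI_scan ps q : (q \in sI (scan_of ps)) =
  [exists x, (1 < size (seen ps x)) && (q == front (seen ps x))].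
Proof.
elim/last_ind: ps => [|ps [u w] IH]; first by rewrite inE; apply/esym/existsP => -[].
apply/idP/existsP => [qI|[x /andP[sz /eqP qE]]].
  have [|qn] := boolP (q \in sI (scan_of ps)).
    rewrite IH => /existsP[x /andP[sz /eqP ->]].
    by exists x; have [-> ->] := front_stable (u, w) sz; rewrite eqxx.
  move: qI; case: scan_stepP => [_|_ _|v ncw E|_ _ _ _ _]; rewrite ?(negbTE qn) //.
  rewrite !inE (negbTE qn) orbF => /eqP->; exists w.
  by rewrite seen_self // E /front /= ppairC eqxx.
case: (front_step sz) => [[sz0 fE]|[xw ncw [v E fE]]].
  apply: (subsetP (sI_mono ps (u, w))); rewrite IH; apply/existsP; exists x.
  by rewrite sz0 qE fE eqxx.
by rewrite qE fE; case: (scan_step_second u ncw E) => -> _; rewrite setU11.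
Qed.

Lemma sA_adj ps u w : (u, w) \in ps -> adj c w -> ppair c u w \in sA (scan_of ps).
Proof.
elim/last_ind: ps => [//|ps p IH]; rewrite mem_rcons inE => /orP[/eqP<- cw|uw cw].
  by case: scan_stepP; rewrite ?cw // => _; rewrite setU11.
exact: subsetP (sA_mono ps p) _ (IH uw cw).
Qed.

Lemma sA_large ps x a : 2 < size (seen ps x) -> a \in seen ps x ->
  a != nth c (seen ps x) 0 -> ppair c (nth c (seen ps x) 0) a \in sA (scan_of ps).
Proof.
elim/last_ind: ps => [//|ps [u w] IH].
have [/seen_other->|/norP[/negbNE/eqP xw ncw]] := boolP ((x != w) || adj c w).
  by move=> sz ax a0; apply: subsetP (sA_mono ps (u, w)) _ (IH sz ax a0).
subst x; rewrite seen_self //.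
case: scan_stepP => [cw|_ ->|v _ ->|v1 v2 s _ E] //=; first by rewrite cw in ncw.
rewrite E /= !inE mem_rcons inE => _ /or4P[/eqP->|/eqP->|/eqP->|aS] av1.
- by rewrite eqxx in av1.
- by rewrite eqxx.
- by rewrite eqxx !orbT.
have sz : 2 < size (seen ps w) by rewrite E /=; case: (s) aS.
have := IH sz; rewrite E /= !inE aS !orbT (negbTE av1) => /(_ isT isT) ->.
by rewrite !orbT.
Qed.

(* Two non-primal vertices with the same front put it on the absence list
   (case (3), the front being already in I when the second one completes it). *)
Lemma sA_shared ps x1 x2 : x1 != x2 ->
  1 < size (seen ps x1) -> 1 < size (seen ps x2) ->
  front (seen ps x1) = front (seen ps x2) -> front (seen ps x1) \in sA (scan_of ps).
Proof.
elim/last_ind: ps => [//|ps [u w] IH] x12 sz1 sz2 f12.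
have newA y v : y != w -> 1 < size (seen ps y) -> front (seen ps y) = ppair c u v ->
    ~~ adj c w -> seen ps w = [:: v] -> ppair c u v \in sA (scan_of (rcons ps (u, w))).
  move=> yw szy fy ncw E; case: (scan_step_second u ncw E) => _ ->.
  have -> : ppair c u v \in sI (scan_of ps).
    by rewrite sI_scan; apply/existsP; exists y; rewrite szy fy eqxx.
  exact: setU11.
case: (front_step sz1) => [[s1 f1]|[xw1 ncw [v E f1]]];
  case: (front_step sz2) => [[s2 f2]|[xw2 ncw' [v' E' f2]]]; rewrite f1.
- apply: subsetP (sA_mono ps (u, w)) _ (IH x12 s1 s2 _).
  by rewrite -f1 -f2.
- have f : front (seen ps x1) = ppair c u v' by rewrite -f1 f12 f2.
  by rewrite f; apply: (newA x1) => //; rewrite -xw2.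
- have f : front (seen ps x2) = ppair c u v by rewrite -f2 -f12 f1.
  by apply: (newA x2) => //; rewrite -xw1 eq_sym.
- by rewrite xw1 xw2 eqxx in x12.
Qed.

Definition scan_pair (p : T * T) : bool := [&& adj c p.1, adj p.1 p.2 & p.2 != c].

Lemma seen_pair ps a x : all scan_pair ps -> a \in seen ps x ->
  [/\ adj c a, adj a x, x != c & ~~ adj c x].
Proof.
move=> /allP ok; rewrite mem_seen => /andP[/ok /and3P[]]; by split.
Qed.

Lemma uniq_seen ps x : uniq ps -> uniq (seen ps x).
Proof.
move=> ups; rewrite map_inj_in_uniq ?filter_uniq // => -[a1 y1] [a2 y2].
by rewrite !mem_filter /= => /andP[/andP[/eqP-> _] _] /andP[/andP[/eqP-> _] _] ->.
Qed.

Lemma size_seen ps x : all scan_pair ps -> uniq ps ->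
  size (seen ps x) <= #|nbr adj c :&: nbr adj x|.
Proof.
move=> ok ups; rewrite -(card_uniqP (uniq_seen x ups)); apply/subset_leq_card/subsetP.
by move=> a /(seen_pair ok) [ca ax _ _]; rewrite !inE ca sym.
Qed.

Lemma front_mem ps x a b : all scan_pair ps -> 1 < size (seen ps x) ->
  front (seen ps x) = ppair c a b -> adj c a -> adj c b ->
  a \in seen ps x /\ b \in seen ps x.
Proof.
move=> ok sz fE ca cb.
have mem i : i < size (seen ps x) ->
    nth c (seen ps x) i \in seen ps x /\ nth c (seen ps x) i != c.
  move=> lt; have m := mem_nth c lt; split=> //.
  by case: (seen_pair ok m) => cn _ _ _; rewrite eq_sym adj_neq.
have [m0 n0] := mem 0 (ltnW sz); have [m1 n1] := mem 1 sz.
have ac : a != c by rewrite eq_sym adj_neq.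
have bc : b != c by rewrite eq_sym adj_neq.
by case: (eq_set2 fE) => -[/pe_inj E0 /pe_inj E1]; rewrite -(E0 n0) -(E1 n1).
Qed.

Definition linked (q : {set {set T}}) : Prop := forall a b, adj c a -> adj c b ->
  q = ppair c a b -> dv_star adj c (pe c a) (pe c b).

Lemma linked_ppair u v : adj c u -> adj c v ->
  dv_star adj c (pe c u) (pe c v) -> linked (ppair c u v).
Proof.
move=> cu cv uv a b ca cb /eq_set2[[]|[]] /pe_inj Ea /pe_inj Eb.
  by rewrite -Ea -?Eb // eq_sym adj_neq.
by rewrite dv_star_sym -Ea -?Eb // eq_sym adj_neq.
Qed.

Lemma seen_hub ps x a b : all scan_pair ps -> uniq ps -> 2 < size (seen ps x) ->
  a \in seen ps x -> b \in seen ps x -> dv_star adj c (pe c a) (pe c b).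
Proof.
move=> ok ups sz /(seen_pair ok) [ca ax xc ncx] /(seen_pair ok) [cb bx _ _].
apply: (dv_star_hub ncx xc) => //.
by rewrite gtn_eqF // (leq_trans sz) ?size_seen.
Qed.

Lemma sA_sound ps : all scan_pair ps -> uniq ps ->
  forall q, q \in sA (scan_of ps) -> linked q.
Proof.
elim/last_ind: ps => [_ _ q|ps [u w] IH ok ups q]; first by rewrite inE.
move: (ok) (ups); rewrite all_rcons rcons_uniq => /andP[/and3P[/= cu uw wc] okp] /andP[_ up].
have old : q \in sA (scan_of ps) -> linked q := IH okp up q.
case: scan_stepP => [cw|_ _|v ncw E|v1 v2 s ncw E].
- case/setU1P => [->|/old //]; apply: linked_ppair => //.
  by apply/connect1/dv_primal; rewrite // ?adj_neq ?not_uc_adj.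
- exact: old.
- case: ifP => [inI|_ /old //]; case/setU1P => [->|/old //].
  have vw : v \in seen ps w by rewrite E inE.
  have [cv vw' _ _] := seen_pair okp vw.
  move: inI; rewrite sI_scan => /existsP[x /andP[szx /eqP fx]].
  have [ux vx] := front_mem okp szx (esym fx) cu cv.
  have [_ ux' xc _] := seen_pair okp ux; have [_ vx' _ _] := seen_pair okp vx.
  have xw : x != w by apply: contraTneq szx => ->; rewrite E.
  apply: linked_ppair => //; have [<-|uv] := eqVneq u v; first exact: connect0.
  apply/connect1/dv_primal => //; apply: not_uc_card; rewrite gtn_eqF //.
  apply: (card_gt2 (a := c) (b := w) (d := x));
    by rewrite ?inE -?(sym c) ?cu ?cv ?uw ?vw' ?ux' ?vx' // eq_sym.
- have sw : seen (rcons ps (u, w)) w = [:: v1, v2 & rcons s u] by rewrite seen_self ?E.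
  have hub a b : a \in [:: v1, v2 & rcons s u] -> b \in [:: v1, v2 & rcons s u] ->
      dv_star adj c (pe c a) (pe c b).
    by rewrite -sw; apply: seen_hub; rewrite // sw /= size_rcons.
  have cS a : a \in [:: v1, v2 & rcons s u] -> adj c a.
    by rewrite -sw => /(seen_pair ok) [].
  have m1 : v1 \in [:: v1, v2 & rcons s u] by rewrite inE eqxx.
  have m2 : v2 \in [:: v1, v2 & rcons s u] by rewrite !inE eqxx orbT.
  have mu : u \in [:: v1, v2 & rcons s u] by rewrite !inE mem_rcons inE eqxx !orbT.
  case/setU1P => [->|/setU1P[->|/setU1P[->|/old //]]];
    apply: linked_ppair; by [apply: cS | apply: hub].
Qed.

Lemma front_pair s a b : size s = 2 -> a \in s -> b \in s -> a != b ->
  front s = ppair c a b.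
Proof.
case: s => [|s0 [|s1 []]] //= _; rewrite !inE /front /=.
by case/orP=> /eqP-> /orP[]/eqP->; rewrite ?eqxx // ppairC.
Qed.

Section ScanAtC.
Variables (ord : seq T) (nb : T -> seq T).
Hypothesis vo : valid_order adj c ord nb.

Let pairs : seq (T * T) := [seq (u, w) | u <- ord, w <- nb u].

Lemma mem_pairs a x : ((a, x) \in pairs) = [&& adj c a, adj a x & x != c].
Proof.
case: vo => _ mo mn; apply/allpairsPdep/idP => [[u [w [uo wn [-> ->]]]]|/and3P[ca ax xc]].
  move: uo wn; rewrite mo => cu; case: (mn _ cu) => _ ->.
  by case/andP=> -> ->; rewrite cu.
exists a, x; rewrite mo ca; split=> //; case: (mn _ ca) => _ ->.
by rewrite ax xc.
Qed.

Lemma pairs_ok : all scan_pair pairs.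
Proof. by apply/allP => -[a x]; rewrite mem_pairs. Qed.

Lemma uniq_pairs : uniq pairs.
Proof.
case: vo => uo mo mn; apply: allpairs_uniq_dep => //.
  by move=> u; rewrite mo => /mn [].
by move=> [x1 y1] [x2 y2] _ _ /= [-> ->].
Qed.

Lemma mem_seen_all a x :
  (a \in seen pairs x) = [&& adj c a, adj a x, x != c & ~~ adj c x].
Proof. by rewrite mem_seen mem_pairs !andbA. Qed.

Lemma size_seen_all x : ~~ adj c x -> x != c ->
  size (seen pairs x) = #|nbr adj c :&: nbr adj x|.
Proof.
move=> ncx xc; rewrite -(card_uniqP (uniq_seen x uniq_pairs)); apply: eq_card => a.
by rewrite mem_seen_all !inE ncx xc !andbT (sym x a).
Qed.

Let st : scan_state T := scan_of pairs.
Let R : rel {set T} := alpha_beta adj c st.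
Let Rs (a b : T) : Prop := connect R (pe c a) (pe c b).

Lemma R_sym : symmetric R.
Proof. by move=> e f; rewrite /R /alpha_beta setUC andbCA. Qed.

Lemma Rs_sym a b : Rs a b -> Rs b a.
Proof. by rewrite /Rs (sym_connect_sym R_sym). Qed.

Lemma Rs_trans a b d : Rs a b -> Rs b d -> Rs a d.
Proof. exact: connect_trans. Qed.

Lemma Rs_absent a b : adj c a -> adj c b -> ppair c a b \in sA st -> Rs a b.
Proof. by move=> ca cb abA; apply: connect1; rewrite /R /alpha_beta !primal_pe ?abA ?orbT. Qed.

Lemma Rs_not_incident a b : adj c a -> adj c b -> ppair c a b \notin sI st -> Rs a b.
Proof. by move=> ca cb abI; apply: connect1; rewrite /R /alpha_beta !primal_pe ?abI. Qed.

Lemma Rs_adj a b : adj c a -> adj c b -> adj a b -> Rs a b.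
Proof.
move=> ca cb ab; apply: Rs_absent => //; apply: sA_adj => //.
by rewrite mem_pairs ca ab eq_sym adj_neq.
Qed.

(* Primal neighbours of a non-primal x with other than two of them are
   R-connected through the first one seen. *)
Lemma Rs_hub x a b : ~~ adj c x -> x != c -> #|nbr adj c :&: nbr adj x| != 2 ->
  adj c a -> adj a x -> adj c b -> adj b x -> Rs a b.
Proof.
move=> ncx xc n2 ca ax cb bx; have [<-|ab] := eqVneq a b; first exact: connect0.
have sz : 2 < size (seen pairs x).
  rewrite size_seen_all // ltn_neqAle eq_sym n2; apply/card_gt1P; exists a, b.
  by rewrite !inE ca cb (sym x a) (sym x b) ax bx.
set a0 := nth c (seen pairs x) 0.
have a0x : a0 \in seen pairs x by rewrite mem_nth // ltnW // ltnW.
have [ca0 _ _ _] := seen_pair pairs_ok a0x.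
have to_a0 y : adj c y -> adj y x -> Rs a0 y.
  move=> cy yx; have [<-|ya0] := eqVneq y a0; first exact: connect0.
  apply: Rs_absent => //; apply: sA_large => //.
  by rewrite mem_seen_all cy yx xc ncx.
exact: Rs_trans (Rs_sym (to_a0 a ca ax)) (to_a0 b cb bx).
Qed.

(* The only
   delicate case is {cu, cv} in I: then u, v are the front of some x, and
   since they span no unique chordless square they have a third common
   neighbour y, through which they are connected. *)
Lemma Rs_primal u v : adj c u -> adj c v -> u != v ->
  ~~ unique_chordless adj c u v -> Rs u v.
Proof.
move=> cu cv uv nuc; have [|nuv] := boolP (adj u v); first exact: Rs_adj.
have [uvI|] := boolP (ppair c u v \in sI st); last exact: Rs_not_incident.
move: uvI; rewrite sI_scan => /existsP[x /andP[szx /eqP fx]].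
have [ux vx] := front_mem pairs_ok szx (esym fx) cu cv.
move: ux vx; rewrite !mem_seen_all => /and4P[_ ux xc ncx] /and4P[_ vx _ _].
have n2 : #|nbr adj u :&: nbr adj v| != 2.
  apply: contra nuc => /eqP n2; rewrite /unique_chordless n2 eqxx /=.
  by apply/existsP; exists x; rewrite !inE ux vx xc nuv ncx.
have cN : c \in nbr adj u :&: nbr adj v by rewrite !inE (sym u) (sym v) cu cv.
have xN : x \in nbr adj u :&: nbr adj v by rewrite !inE ux vx.
have cx : c != x by rewrite eq_sym.
have [y] := card_third cN xN cx n2.
rewrite !inE => /andP[uy vy] /andP[yc yx].
have [cy|ncy] := boolP (adj c y).
  by apply: (Rs_trans (b := y)); apply: Rs_adj; rewrite // sym.
have [ny2|/negPn/eqP y2] := boolP (#|nbr adj c :&: nbr adj y| != 2).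
  by apply: (Rs_hub ncy yc ny2); rewrite // sym.
(* u, v are then the only primal neighbours of both x and y: a shared front *)
have fy : front (seen pairs y) = front (seen pairs x).
  rewrite -fx; apply: front_pair => //;
    by rewrite ?size_seen_all ?mem_seen_all ?cu ?cv ?uy ?vy ?yc.
apply: Rs_absent => //; rewrite fx -fy; apply: (sA_shared (x2 := x)) => //.
by rewrite size_seen_all ?y2.
Qed.

Lemma R_sound e f : R e f -> dv_star adj c e f.
Proof.
case/and3P=> /primalP[a ca ->] /primalP[b cb ->].
have [<- _|ab] := eqVneq a b; first exact: connect0.
case/orP=> [nI|inA]; last exact: (sA_sound pairs_ok uniq_pairs inA).
have [uc|nuc] := boolP (unique_chordless adj c a b); last exact/connect1/dv_primal.
case/andP: uc => _ /existsP[x /and4P[]]; rewrite !inE => /andP[ax bx] xc nab ncx.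
have [n2|/negPn/eqP e2] := boolP (#|nbr adj c :&: nbr adj x| != 2).
  exact: (dv_star_hub ncx xc n2).
(* otherwise a, b are the two primal neighbours of x, whose front is in I *)
have fE : front (seen pairs x) = ppair c a b.
  by apply: front_pair => //; rewrite ?size_seen_all ?mem_seen_all ?ca ?cb ?ax ?bx ?xc.
move: nI; rewrite sI_scan; case/existsP; exists x.
by rewrite fE eqxx andbT size_seen_all ?e2.
Qed.

(* The ways a non-primal edge g can be delta-related to the primal edge cu:
   g = ub shares the vertex u (clause (i)), or g = yz is opposite to cu in a
   chordless square c u z y (clause (ii)). *)
Definition side_edge (u : T) (g : {set T}) : Prop := exists b,
  [/\ g = [set u; b], b != c, adj u b & ~~ unique_chordless adj u c b].

Definition opposite_edge (u : T) (g : {set T}) : Prop := exists y z,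
  [/\ g = [set y; z], adj c y, ~~ adj c z, z != c &
      [/\ adj u z, adj y z, ~~ adj u y & u != y]].

Lemma delta_nonprimal u (g : {set T}) : adj c u -> c \notin g -> delta adj (pe c u) g ->
  side_edge u g \/ opposite_edge u g.
Proof.
move=> cu cg /and3P[_ _ /or3P[]]; last by move/eqP=> E; rewrite -E c_in_pe in cg.
- case/andP=> _ /existsP[v /existsP[u' /existsP[w /and5P[vu' vw /eqP eE /eqP gE nuc]]]].
  have vc : v != c by apply: contraNneq cg => <-; rewrite gE set21.
  have [[cv _]|[cu' uv]] := eq_set2 eE; first by rewrite cv eqxx in vc.
  subst u' v; left; exists w; split=> //.
  by apply: contraNneq cg => <-; rewrite gE set22.
- case/existsP=> v /existsP[u' /existsP[x /existsP[w /and3P[sq /eqP eE /eqP ->]]]].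
  move: sq => /and5P[vu' u'x xw wv /and4P[xv u'w nu'w nvx]].
  have [[? ?]|[? ?]] := eq_set2 eE; subst v u'; right.
  + by exists w, x; rewrite (sym c w) (sym w x).
  + exists x, w; split; rewrite 1?setUC 1?(eq_sym w) //.
    by split; rewrite 1?(sym u w) 1?(eq_sym u).
Qed.

(* Two side edges ub = vb' at distinct u, v force u, v to be adjacent. *)
Lemma Rs_side_side u v g : adj c u -> adj c v -> u != v ->
  side_edge u g -> side_edge v g -> Rs u v.
Proof.
move=> cu cv uv [b [-> _ ub _]] [b' [gE _ _ _]].
have [[uv' _]|[_ bv]] := eq_set2 gE; first by rewrite uv' eqxx in uv.
by apply: Rs_adj; rewrite // -bv.
Qed.

(* A side edge uz of u opposite to cv in a chordless square c v z u: the
   absence of a unique chordless square at u makes z a hub. *)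
Lemma Rs_side_opposite u v g : adj c u -> adj c v -> u != v ->
  side_edge u g -> opposite_edge v g -> Rs u v.
Proof.
move=> cu cv uv [b [-> bc ub nuc]] [y [z [gE cy ncz zc [vz yz nvy vy]]]].
have [[uy bz]|[uz _]] := eq_set2 gE; last by rewrite -uz cu in ncz.
subst y b; apply: (Rs_hub ncz zc) => //.
apply: contra nuc => /eqP n2; rewrite /unique_chordless n2 eqxx /=.
by apply/existsP; exists v; rewrite !inE cv (sym z v) vz eq_sym uv ncz (sym u v).
Qed.

(* Two edges cu, cv opposite to the same edge yz: u, v, y are three primal
   neighbours of z. *)
Lemma Rs_opposite_opposite u v g : adj c u -> adj c v -> u != v ->
  opposite_edge u g -> opposite_edge v g -> Rs u v.
Proof.
move=> cu cv uv [y [z [-> cy ncz zc [uz yz _ uy]]]] [y' [z' [gE _ ncz' _ [vz _ _ vy]]]].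
have [[yy zz]|[yz' _]] := eq_set2 gE; last by rewrite yz' in cy; rewrite cy in ncz'.
subst y' z'; apply: (Rs_hub ncz zc) => //; rewrite gtn_eqF //.
apply: (card_gt2 (a := u) (b := v) (d := y));
  by rewrite ?inE ?cu ?cv ?cy ?(sym z) ?uz ?vz ?yz // eq_sym.
Qed.

Lemma Rs_via_edge u v (g : {set T}) : adj c u -> adj c v -> u != v -> c \notin g ->
  delta adj (pe c u) g -> delta adj (pe c v) g -> Rs u v.
Proof.
move=> cu cv uv cg /(delta_nonprimal cu cg) [] gu /(delta_nonprimal cv cg) [] gv.
- exact: Rs_side_side gu gv.
- exact: Rs_side_opposite gu gv.
- by apply: Rs_sym; apply: Rs_side_opposite gv gu; rewrite // eq_sym.
- exact: Rs_opposite_opposite gu gv.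
Qed.

(* The part of the d_c-component of a primal edge e0 visible to R: primal
   edges R-connected to e0, and edges avoiding c that are delta-related to
   such a primal edge. *)
Definition reach (e0 g : {set T}) : bool :=
  (primal adj c g && connect R e0 g) ||
  ((c \notin g) && [exists k, [&& primal adj c k, connect R e0 k & delta adj k g]]).

Lemma reach_step e0 g h : reach e0 g -> dv adj c g h -> reach e0 h.
Proof.
case/orP=> [/andP[/primalP[u cu ->] Rg]|/andP[cg /existsP[k /and3P[/primalP[u cu ->] Rk dkg]]]]
  /andP[dgh cgh].
- have [ch|ch] := boolP (c \in h); last first.
    rewrite /reach ch /=; apply/orP; right; apply/existsP; exists (pe c u).
    by rewrite primal_pe ?Rg.
  have /and3P[_ eh _] := dgh; have /primalP[v cv hE] := edge_primal eh ch; subst h.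
  rewrite /reach primal_pe //=; apply/orP; left; apply: connect_trans Rg _.
  have [<-|uv] := eqVneq u v; first exact: connect0.
  exact: Rs_primal cu cv uv (delta_primal cu cv uv dgh).
- have ch : c \in h by move: cgh; rewrite (negbTE cg).
  have /and3P[_ eh _] := dgh; have /primalP[v cv hE] := edge_primal eh ch; subst h.
  rewrite /reach primal_pe //=; apply/orP; left; apply: connect_trans Rk _.
  have [<-|uv] := eqVneq u v; first exact: connect0.
  exact: Rs_via_edge cu cv uv cg dkg (delta_sym dgh).
Qed.

Lemma reach_path e0 g p : reach e0 g -> path (dv adj c) g p -> reach e0 (last g p).
Proof.
elim: p g => [//|h p IH] g /= Rg /andP[dgh pth].
exact: IH (reach_step Rg dgh) pth.
Qed.

Lemma R_closure_correct (e f : {set T}) : is_edge adj e -> c \in e -> c \in f ->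
  connect R e f <-> dv_star adj c e f.
Proof.
move=> ee ce cf; split; first exact: (connect_sub R_sound).
case/connectP=> p pth fE.
have : reach e (last e p) by apply: reach_path pth; rewrite /reach edge_primal ?connect0.
by rewrite -fE /reach cf /= orbF => /andP[].
Qed.

End ScanAtC.

End Graph.

Unset Implicit Arguments.

Theorem mainTheorem6 (T : finType) (adj : rel T) :
  symmetric adj -> irreflexive adj ->
  (forall x y : T, connect adj x y) ->
  forall (c : T) (ord : seq T) (nb : T -> seq T),
  valid_order adj c ord nb ->
  forall e f : {set T},
  is_edge adj e -> is_edge adj f -> c \in e -> c \in f -> e != f ->
  (connect (alpha_beta adj c (scan adj c ord nb)) e f <-> dv_star adj c e f).
Proof.
move=> sym irr _ c ord nb vo e f ee _ ce cf _.
exact: R_closure_correct.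
Qed.
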